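(* Let $\Lambda$ be a row-finite $k$-graph with no sinks and no sources such that $\Lambda^0$ is finite. If the system $(\Lambda,\mathbb{Z}^k,d)$ is cofinal, then $\Lambda$ is primitive.
   Context: A $k$-graph is a countable category $\Lambda$ with a functor $d:\Lambda\to\mathbb{N}^k$ with unique factorisation. $\Lambda^n=d^{-1}(n)$, $\Lambda^0$ = vertices, $uXv=\{\lambda\in X:r(\lambda)=u,s(\lambda)=v\}$. Row-finite: $v\Lambda^n$ finite; no sources: $v\Lambda^n\ne\emptyset$ for $n\neq0$; no sinks: $\Lambda^nv\ne\emptyset$ for $n\ne0$. For $m,n\in\mathbb{N}^k$, $m>n$ means $m_i>n_i$ for all $i$. $\Lambda$ is primitive if there is $N\in\mathbb{N}^k$, $N>0$, with $u\Lambda^Nv\ne\emptyset$ for all $u,v\in\Lambda^0$. Regarding $d$ as a functor into the group $\mathbb{Z}^k$, the system $(\Lambda,\mathbb{Z}^k,d)$ is cofinal if for all $v,w\in\Lambda^0$ and $a,b\in\mathbb{Z}^k$ there is $N\in\mathbb{N}^k$ such that for every $\alpha\in w\Lambda^N$ there is $\beta\in v\Lambda s(\alpha)$ with $a+d(\beta)=b+d(\alpha)$. *)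

From mathcomp Require Import all_boot all_order all_algebra.
Set Implicit Arguments. Unset Strict Implicit. Unset Printing Implicit Defensive.

Definition degk (k : nat) := {ffun 'I_k -> nat}.
Definition deg0 (k : nat) : degk k := [ffun => 0%N].
Definition degadd (k : nat) (m n : degk k) : degk k := [ffun i => (m i + n i)%N].

(* A k-graph: a countable category (objects V, morphisms M) with a degree
   functor d : M -> N^k having the unique factorisation property.
   Conventions: lam : s lam -> r lam (range r, source s); comp lam mu is the
   composite "lam mu", meaningful when s lam = r mu. *)
Record kgraph (k : nat) := KGraph {
  kV : countType;
  kM : countType;
  kr : kM -> kV;
  ks : kM -> kV;
  kid : kV -> kM;
  kcomp : kM -> kM -> kM;
  kd : kM -> degk k;
  kid_r : forall v, kr (kid v) = v;
  kid_s : forall v, ks (kid v) = v;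
  kcomp_r : forall l m, ks l = kr m -> kr (kcomp l m) = kr l;
  kcomp_s : forall l m, ks l = kr m -> ks (kcomp l m) = ks m;
  kcomp_idl : forall l, kcomp (kid (kr l)) l = l;
  kcomp_idr : forall l, kcomp l (kid (ks l)) = l;
  kcompA : forall l m n, ks l = kr m -> ks m = kr n ->
     kcomp l (kcomp m n) = kcomp (kcomp l m) n;
  kd_id : forall v, kd (kid v) = deg0 k;
  kd_comp : forall l m, ks l = kr m -> kd (kcomp l m) = degadd (kd l) (kd m);
  kfactor : forall l (m n : degk k), kd l = degadd m n ->
     exists! p : kM * kM, [/\ ks p.1 = kr p.2, kd p.1 = m, kd p.2 = n
                            & kcomp p.1 p.2 = l]
}.

Section Props.
Variables (k : nat) (G : kgraph k).

Definition row_finite : Prop :=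
  forall (v : kV G) (n : degk k), exists s : seq (kM G),
    forall l, kr l = v -> kd l = n -> l \in s.

Definition no_sources : Prop :=
  forall (v : kV G) (n : degk k), n <> deg0 k -> exists l, kr l = v /\ kd l = n.

Definition no_sinks : Prop :=
  forall (v : kV G) (n : degk k), n <> deg0 k -> exists l, ks l = v /\ kd l = n.

Definition vertices_finite : Prop := exists s : seq (kV G), forall v, v \in s.

Definition primitive : Prop :=
  exists N : degk k, (forall i, (0 < N i)%N) /\
    forall u v : kV G, exists l, [/\ kr l = u, ks l = v & kd l = N].

Definition cofinal : Prop :=
  forall (v w : kV G) (a b : 'I_k -> int), exists N : degk k,
    forall alpha, kr alpha = w -> kd alpha = N ->
      exists beta, [/\ kr beta = v, ks beta = ks alpha &
        forall i, (a i + (kd beta i)%:Z = b i + (kd alpha i)%:Z)%R].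
End Props.

From mathcomp Require Import all_boot all_order all_algebra.
Set Implicit Arguments. Unset Strict Implicit. Unset Printing Implicit Defensive.
Import GRing.Theory.

(* Cofinality with a = b = 0 says: for each pair of vertices (v, w) there is a
   degree N such that every path of degree N out of w can be matched by a path
   of the same degree from v to the same source. By unique factorisation this
   property persists for all larger degrees, so finitely many vertices admit a
   common positive N; any vertex x then receives a path of degree N (no sinks),
   and matching it gives a path u Lambda^N x. *)

Definition deg_le (k : nat) (m n : degk k) : Prop := forall i, (m i <= n i)%N.

Section Matching.
Variables (k : nat) (G : kgraph k).

Definition matched_at (v w : kV G) (N : degk k) : Prop :=
  forall alpha, kr alpha = w -> kd alpha = N ->
    exists beta, [/\ kr beta = v, ks beta = ks alpha & kd beta = kd alpha].

Lemma matched_at_cofinal (v w : kV G) :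
  cofinal G -> exists N, matched_at v w N.
Proof.
move=> cofG; have [N HN] := cofG v w (fun _ => 0%R) (fun _ => 0%R).
exists N => alpha alpha_r alpha_d.
have [beta [beta_r beta_s beta_d]] := HN alpha alpha_r alpha_d.
exists beta; split => //; apply/ffunP => i.
by have /eqP := beta_d i; rewrite !add0r eqz_nat => /eqP.
Qed.

(* Split a path of degree N' as alpha1 alpha2 with d(alpha1) = N, match
   alpha1 and glue the match back onto alpha2. *)
Lemma matched_at_le (v w : kV G) (N N' : degk k) :
  matched_at v w N -> deg_le N N' -> matched_at v w N'.
Proof.
move=> HN leNN' alpha alpha_r alpha_d.
have alpha_split : kd alpha = degadd N [ffun i => N' i - N i].
  by rewrite alpha_d; apply/ffunP => i; rewrite !ffunE subnKC.
have [[a1 a2] [[/= a12 a1_d a2_d a_comp] _]] := kfactor alpha_split.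
have a1_r : kr a1 = w by rewrite -alpha_r -a_comp kcomp_r.
have [b [b_r b_s b_d]] := HN a1 a1_r a1_d.
have b_a2 : ks b = kr a2 by rewrite b_s.
exists (kcomp b a2); split.
- by rewrite kcomp_r.
- by rewrite kcomp_s // -a_comp kcomp_s.
- by rewrite kd_comp // -a_comp kd_comp // b_d.
Qed.

Lemma path_into_vertex (x : kV G) (N : degk k) :
  no_sinks G -> (forall i, (0 < N i)%N) -> exists l, ks l = x /\ kd l = N.
Proof.
move=> sinkG N_pos; case: (posnP k) => [k0 | k_pos].
  exists (kid x); split; first exact: kid_s.
  by apply/ffunP => i; have := ltn_ord i; rewrite {2}k0.
apply: sinkG => N0.
by have := N_pos (Ordinal k_pos); rewrite N0 ffunE.
Qed.

End Matching.

Lemma deg_common_pos (k : nat) (T : eqType) (P : T -> degk k -> Prop) (s : seq T) :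
  (forall t m n, P t m -> deg_le m n -> P t n) -> (forall t, exists n, P t n) ->
  exists n : degk k, (forall i, (0 < n i)%N) /\ forall t, t \in s -> P t n.
Proof.
move=> P_up P_ex; elim: s => [|t s [n [n_pos Pn]]].
  by exists [ffun => 1%N]; split => // i; rewrite ffunE.
have [m Pm] := P_ex t.
exists [ffun i => maxn (n i) (m i)]; split.
  by move=> i; rewrite ffunE (leq_trans (n_pos i)) // leq_maxl.
move=> t'; rewrite inE => /orP [/eqP -> | t'_s].
  by apply: P_up Pm _ => i; rewrite ffunE leq_maxr.
by apply: P_up (Pn _ t'_s) _ => i; rewrite ffunE leq_maxl.
Qed.

Theorem theorem7p1 (k : nat) (G : kgraph k) :
  row_finite G -> no_sinks G -> no_sources G -> vertices_finite G ->
  cofinal G -> primitive G.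
Proof.
move=> _ sinkG _ [s s_all] cofG.
have [N [N_pos matchedN]] :=
  deg_common_pos [seq (v, w) | v <- s, w <- s]
    (fun p m n => @matched_at_le k G p.1 p.2 m n)
    (fun p => matched_at_cofinal p.1 p.2 cofG).
exists N; split => // u x.
have [alpha [alpha_s alpha_d]] := path_into_vertex x sinkG N_pos.
have [beta [beta_r beta_s beta_d]] :=
  matchedN (u, kr alpha) (allpairs_f _ (s_all u) (s_all _)) alpha erefl alpha_d.
by exists beta; rewrite beta_s beta_d.
Qed.
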